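(* For every integer $i\ge 0$, $\lim_{k\to\infty}\overline{\alpha}(\{1,k,k+2i+1\})=\frac{i+1}{2i+3}$.
   Context: For a finite set $S$ of positive integers, the distance graph $G(S)$ has vertex set $\mathbb{Z}$, with $i,j$ adjacent iff $|i-j|\in S$. The density of $A\subseteq\mathbb{Z}$ is $\delta(A)=\limsup_{N\to\infty}\frac{|A\cap[-N,N]|}{2N+1}$, and the independence ratio $\overline{\alpha}(S)$ is the supremum of $\delta(A)$ over independent sets $A$ of $G(S)$. *)

From Stdlib Require Import Reals ZArith List.
From Coquelicot Require Import Coquelicot.
Open Scope R_scope.

(* Distance graph G(S): i ~ j iff |i - j| \in S.  S is a finite set of
   positive integers, given as a list. *)
Definition adjacent (S : list Z) (i j : Z) : Prop := In (Z.abs (i - j)) S.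

Definition independent (S : list Z) (A : Z -> bool) : Prop :=
  forall i j : Z, A i = true -> A j = true -> ~ adjacent S i j.

Definition count_window (A : Z -> bool) (N : nat) : nat :=
  length (filter A (map (fun m => (Z.of_nat m - Z.of_nat N)%Z) (seq 0 (2 * N + 1)))).

Definition density (A : Z -> bool) : Rbar :=
  LimSup_seq (fun N : nat => INR (count_window A N) / INR (2 * N + 1)).

Definition indep_ratio (S : list Z) : Rbar :=
  Lub_Rbar (fun r : R => exists A : Z -> bool, independent S A /\ density A = Finite r).

(** Upper bound: for every x the vertices x, x+k, x+k+1, ..., x+k+2i+1 form
    an odd cycle of length 2i+3 in G({1, k, k+2i+1}), so an independent set
    meets each such cycle in at most i+1 points; averaging over all shifts x
    inside [-N, N] bounds the density by (i+1)/(2i+3).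

    Lower bound: split Z into blocks of length k and write x = kq + b with
    0 <= b < k.  Put x in A when b >= 2i+1 and q + b lies, modulo 2i+3, in
    the set {0, 2, ..., 2i} of size i+1.  Steps 1 and k move q + b by +1,
    step k+2i+1 moves it by 2i+2 = -1 (mod 2i+3), unless the step leaves the
    block into the excluded residues b < 2i+1; since no two cyclically
    consecutive residues are chosen, A is independent.  Each block carries
    about (i+1)(k-2i-1)/(2i+3) points, which gives density tending to
    (i+1)/(2i+3) as k grows. *)

From Stdlib Require Import Reals ZArith List Lia Lra.
From Coquelicot Require Import Coquelicot.
Open Scope R_scope.

(** * Counting points of a subset of Z in an interval *)

Fixpoint count_from (A : Z -> bool) (a : Z) (l : nat) : nat :=
  match l with
  | O => O
  | S l' => (Nat.b2n (A a) + count_from A (a + 1) l')%nat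
  end.

Section Counting.
Variable A : Z -> bool.

Lemma count_window_eq N : count_window A N = count_from A (- Z.of_nat N) (2 * N + 1).
Proof.
  assert (Hseq : forall l s,
    length (filter A (map (fun m => (Z.of_nat m - Z.of_nat N)%Z) (seq s l)))
    = count_from A (Z.of_nat s - Z.of_nat N) l).
  { induction l as [|l IH]; intros s; [reflexivity|].
    cbn [seq map filter count_from].
    replace (Z.of_nat s - Z.of_nat N + 1)%Z with (Z.of_nat (S s) - Z.of_nat N)%Z by lia.
    rewrite <- IH. destruct (A _); reflexivity. }
  unfold count_window. rewrite Hseq. reflexivity.
Qed.

Lemma count_from_add l1 l2 a :
  count_from A a (l1 + l2) = (count_from A a l1 + count_from A (a + Z.of_nat l1) l2)%nat.
Proof.
  revert a; induction l1 as [|l1 IH]; intros a; cbn [count_from Nat.add].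
  - rewrite Z.add_0_r; reflexivity.
  - rewrite IH. replace (a + 1 + Z.of_nat l1)%Z with (a + Z.of_nat (S l1))%Z by lia. lia.
Qed.

Lemma count_from_snoc a l :
  count_from A a (S l) = (count_from A a l + Nat.b2n (A (a + Z.of_nat l)))%nat.
Proof. rewrite <- Nat.add_1_r, count_from_add. cbn. lia. Qed.

Lemma count_from_subinterval a M b L :
  (a <= b)%Z -> (b + Z.of_nat L <= a + Z.of_nat M)%Z ->
  (count_from A b L <= count_from A a M)%nat.
Proof.
  intros Hab HbL.
  set (d := Z.to_nat (b - a)).
  replace M with (d + (L + (M - d - L)))%nat by (unfold d; lia).
  rewrite !count_from_add.
  replace (a + Z.of_nat d)%Z with b by (unfold d; lia). lia.
Qed.

Lemma count_from_repeat T c :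
  (forall x, (c <= count_from A x T)%nat) ->
  forall q a, (q * c <= count_from A a (q * T))%nat.
Proof.
  intros Hc q; induction q as [|q IH]; intros a; [cbn; lia|].
  cbn [Nat.mul]. rewrite count_from_add.
  specialize (Hc a). specialize (IH (a + Z.of_nat T)%Z). lia.
Qed.

Lemma count_from_no_consecutive :
  (forall y, A y = true -> A (y + 1)%Z = false) ->
  forall j y, (count_from A y (2 * j) <= j)%nat.
Proof.
  intros Hcons j; induction j as [|j IH]; intros y; [cbn; lia|].
  replace (2 * S j)%nat with (S (S (2 * j))) by lia. cbn [count_from].
  specialize (IH (y + 1 + 1)%Z). specialize (Hcons y).
  destruct (A y), (A (y + 1)%Z); cbn in *; lia.
Qed.

End Counting.

Fixpoint sum_from (F : Z -> nat) (a : Z) (M : nat) : nat :=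
  match M with
  | O => O
  | S M' => (F a + sum_from F (a + 1) M')%nat
  end.

Lemma sum_from_le F B : (forall x, (F x <= B)%nat) -> forall M a, (sum_from F a M <= M * B)%nat.
Proof.
  intros HB M; induction M as [|M IH]; intros a; cbn; [lia|].
  specialize (HB a). specialize (IH (a + 1)%Z). lia.
Qed.

Lemma sum_from_add F G M a :
  sum_from (fun x => F x + G x)%nat a M = (sum_from F a M + sum_from G a M)%nat.
Proof. revert a; induction M as [|M IH]; intros a; cbn; [lia|]. rewrite IH; lia. Qed.

Lemma sum_from_ext F G : (forall x, F x = G x) -> forall M a, sum_from F a M = sum_from G a M.
Proof. intros HFG M; induction M as [|M IH]; intros a; cbn; [lia|]. rewrite IH, HFG; lia. Qed.

Lemma sum_from_indicator A c M a :
  sum_from (fun x => Nat.b2n (A (x + c)%Z)) a M = count_from A (a + c) M.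
Proof.
  revert a; induction M as [|M IH]; intros a; cbn; [lia|].
  rewrite IH. replace (a + 1 + c)%Z with (a + c + 1)%Z by lia. reflexivity.
Qed.

(* Double counting: the sum is the total over the [L] shifted windows of length [M]. *)
Lemma sum_from_count_ge A c a M L V :
  (forall t, (t < L)%nat -> (V <= count_from A (a + c + Z.of_nat t) M)%nat) ->
  (L * V <= sum_from (fun x => count_from A (x + c) L) a M)%nat.
Proof.
  revert V; induction L as [|L IH]; intros V HV; [cbn; lia|].
  rewrite (sum_from_ext _
    (fun x => count_from A (x + c) L + Nat.b2n (A (x + (c + Z.of_nat L))%Z))%nat).
  2:{ intros x. rewrite count_from_snoc, Z.add_assoc. reflexivity. }
  rewrite sum_from_add, sum_from_indicator.
  specialize (IH V (fun t Ht => HV t ltac:(lia))).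
  specialize (HV L ltac:(lia)). rewrite Z.add_assoc. lia.
Qed.

(** * Upper bound for independent sets *)

Definition dist_set (k i : nat) : list Z := Z.of_nat k :: Z.of_nat (k + 2 * i + 1) :: 1%Z :: nil.

Section UpperBound.
Variables k i : nat.
Variable A : Z -> bool.
Hypothesis A_indep : independent (dist_set k i) A.

Lemma independent_shift x d : In d (dist_set k i) ->
  A x = true -> A (x + d)%Z = false.
Proof.
  intros Hd Hx. destruct (A (x + d)%Z) eqn:Hxd; [|reflexivity].
  exfalso. apply (A_indep x (x + d)%Z Hx Hxd). unfold adjacent.
  replace (Z.abs (x - (x + d))) with d; [exact Hd|].
  destruct Hd as [<-|[<-|[<-|[]]]]; lia.
Qed.

Lemma odd_cycle_count x :
  (Nat.b2n (A x) + count_from A (x + Z.of_nat k) (2 * i + 2) <= i + 1)%nat.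
Proof.
  assert (Hcons : forall y, A y = true -> A (y + 1)%Z = false).
  { intros y. apply independent_shift. cbn; tauto. }
  destruct (A x) eqn:Hx.
  - assert (Hk : A (x + Z.of_nat k)%Z = false).
    { apply independent_shift; [cbn; tauto | exact Hx]. }
    assert (Hkm : A (x + Z.of_nat k + Z.of_nat (2 * i + 1))%Z = false).
    { replace (x + Z.of_nat k + Z.of_nat (2 * i + 1))%Z with (x + Z.of_nat (k + 2 * i + 1))%Z
        by lia.
      apply independent_shift; [cbn; tauto | exact Hx]. }
    replace (2 * i + 2)%nat with (S (S (2 * i))) by lia.
    rewrite count_from_snoc. cbn [count_from]. rewrite Hk.
    replace (Z.of_nat (S (2 * i))) with (Z.of_nat (2 * i + 1)) by lia. rewrite Hkm.
    pose proof (count_from_no_consecutive A Hcons i (x + Z.of_nat k + 1)%Z). cbn [Nat.b2n]. lia.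
  - pose proof (count_from_no_consecutive A Hcons (i + 1) (x + Z.of_nat k)%Z).
    replace (2 * (i + 1))%nat with (2 * i + 2)%nat in * by lia. cbn [Nat.b2n]. lia.
Qed.

Lemma independent_window_count N :
  ((2 * i + 3) * count_window A N <= (i + 1) * (2 * N + 1 + (2 * i + 1 + k)))%nat.
Proof.
  rewrite count_window_eq.
  set (W := count_from A (- Z.of_nat N) (2 * N + 1)).
  set (a := (- Z.of_nat N - Z.of_nat k - Z.of_nat (2 * i + 1))%Z).
  set (M := (2 * N + 1 + (2 * i + 1 + k))%nat).
  pose proof (sum_from_le _ _ odd_cycle_count M a) as Hsum.
  rewrite sum_from_add in Hsum.
  rewrite (sum_from_ext _ (fun x => Nat.b2n (A (x + 0)%Z))) in Hsum
    by (intros; rewrite Z.add_0_r; reflexivity).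
  rewrite sum_from_indicator in Hsum.
  assert (Hfirst : (W <= count_from A (a + 0) M)%nat).
  { apply count_from_subinterval; unfold a, M; lia. }
  assert (Hcycle : ((2 * i + 2) * W
                    <= sum_from (fun x => count_from A (x + Z.of_nat k) (2 * i + 2)) a M)%nat).
  { apply sum_from_count_ge. intros t Ht. apply count_from_subinterval; unfold a, M; lia. }
  fold M. nia.
Qed.

End UpperBound.

(** * An independent set of density close to (i+1)/(2i+3) *)

Definition pattern (i : nat) (e : Z) : bool :=
  let r := (e mod (2 * Z.of_nat i + 3))%Z in Z.even r && (r <? 2 * Z.of_nat i + 2)%Z.

Section Pattern.
Variable i : nat.

Lemma pattern_periodic e : pattern i (e + (2 * Z.of_nat i + 3)) = pattern i e.
Proof.
  unfold pattern. rewrite Z.add_mod, Z.mod_same, Z.add_0_r, Z.mod_mod by lia. reflexivity.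
Qed.

Lemma pattern_no_consecutive e : pattern i e = true -> pattern i (e + 1) = false.
Proof.
  unfold pattern.
  pose proof (Z.mod_pos_bound e (2 * Z.of_nat i + 3) ltac:(lia)) as Hr.
  rewrite Z.add_mod, (Z.mod_small 1) by lia.
  set (r := (e mod (2 * Z.of_nat i + 3))%Z) in *.
  intros [Heven Hlt]%andb_prop. apply Z.ltb_lt in Hlt.
  rewrite Z.mod_small, Z.even_add, Heven by lia. reflexivity.
Qed.

Lemma pattern_small e : (0 <= e < 2 * Z.of_nat i + 3)%Z ->
  pattern i e = (Z.even e && (e <? 2 * Z.of_nat i + 2)%Z)%bool.
Proof. intros He. unfold pattern. rewrite Z.mod_small by exact He. reflexivity. Qed.

Lemma pattern_count_pairs j s : Z.even s = true -> (0 <= s)%Z ->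
  (s + 2 * Z.of_nat j <= 2 * Z.of_nat i + 2)%Z -> count_from (pattern i) s (2 * j) = j.
Proof.
  revert s; induction j as [|j IH]; intros s Heven Hs Hbound; [reflexivity|].
  replace (2 * S j)%nat with (S (S (2 * j))) by lia. cbn [count_from].
  rewrite !pattern_small by lia. rewrite IH by (rewrite ?Z.even_add, ?Heven; reflexivity || lia).
  rewrite Z.even_add, Heven. replace (s <? 2 * Z.of_nat i + 2)%Z with true
    by (symmetry; apply Z.ltb_lt; lia). cbn. lia.
Qed.

Lemma pattern_count s : count_from (pattern i) s (2 * i + 3) = (i + 1)%nat.
Proof.
  assert (Hshift : forall s, count_from (pattern i) (s + 1) (2 * i + 3)
                             = count_from (pattern i) s (2 * i + 3)).
  { intros t. replace (2 * i + 3)%nat with (S (2 * i + 2)) by lia.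
    rewrite count_from_snoc. cbn [count_from].
    replace (t + 1 + Z.of_nat (2 * i + 2))%Z with (t + (2 * Z.of_nat i + 3))%Z by lia.
    rewrite pattern_periodic. lia. }
  induction s as [|s IH|s IH] using Z.peano_ind.
  - replace (2 * i + 3)%nat with (S (2 * (i + 1))) by lia.
    rewrite count_from_snoc, pattern_count_pairs by (reflexivity || lia).
    rewrite pattern_small by lia.
    replace (0 + Z.of_nat (2 * (i + 1)) <? 2 * Z.of_nat i + 2)%Z with false
      by (symmetry; apply Z.ltb_ge; lia).
    rewrite Bool.andb_false_r. cbn. lia.
  - rewrite <- Z.add_1_r, Hshift. exact IH.
  - rewrite <- (Hshift (Z.pred s)), Z.add_1_r, Z.succ_pred. exact IH.
Qed.

Lemma pattern_count_ge s L : ((i + 1) * (L / (2 * i + 3)) <= count_from (pattern i) s L)%nat.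
Proof.
  rewrite (Nat.div_mod L (2 * i + 3)) at 2 by lia.
  rewrite count_from_add, (Nat.mul_comm (2 * i + 3)).
  pose proof (count_from_repeat (pattern i) (2 * i + 3) (i + 1)
                (fun x => Nat.eq_le_incl _ _ (eq_sym (pattern_count x))) (L / (2 * i + 3)) s).
  lia.
Qed.

End Pattern.

Lemma independent_of_shift S A :
  (forall x d, In d S -> A x = true -> A (x + d)%Z = false) -> independent S A.
Proof.
  intros Hshift x y Hx Hy Hadj. unfold adjacent in Hadj.
  destruct (Z_le_gt_dec x y) as [Hxy|Hxy].
  - specialize (Hshift x _ Hadj Hx).
    replace (x + Z.abs (x - y))%Z with y in Hshift by lia. congruence.
  - specialize (Hshift y _ Hadj Hy).
    replace (y + Z.abs (x - y))%Z with x in Hshift by lia. congruence.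
Qed.

Definition construction (k i : nat) (x : Z) : bool :=
  ((2 * Z.of_nat i + 1 <=? x mod Z.of_nat k)%Z
   && pattern i (x / Z.of_nat k + x mod Z.of_nat k))%bool.

(* One period of the pattern may be lost where a window of length k straddles two blocks. *)
Definition block_count_bound (k i : nat) : nat :=
  ((i + 1) * ((k - (2 * i + 1)) / (2 * i + 3) - 1))%nat.

Lemma div_add_le a b n : (0 < n)%nat -> ((a + b) / n <= a / n + b / n + 1)%nat.
Proof.
  intros Hn.
  enough ((a + b) / n < a / n + b / n + 2)%nat by lia.
  apply Nat.Div0.div_lt_upper_bound.
  pose proof (Nat.div_mod a n ltac:(lia)). pose proof (Nat.div_mod b n ltac:(lia)).
  pose proof (Nat.mod_upper_bound a n ltac:(lia)). pose proof (Nat.mod_upper_bound b n ltac:(lia)).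
  nia.
Qed.

Section Construction.
Variables k i : nat.
Hypothesis k_pos : (0 < k)%nat.

Lemma block_decomposition x : exists q b, x = (Z.of_nat k * q + b)%Z /\ (0 <= b < Z.of_nat k)%Z.
Proof.
  exists (x / Z.of_nat k)%Z, (x mod Z.of_nat k)%Z. split.
  - apply Z.div_mod; lia.
  - apply Z.mod_pos_bound; lia.
Qed.

Lemma construction_block q b : (0 <= b < Z.of_nat k)%Z ->
  construction k i (Z.of_nat k * q + b) = ((2 * Z.of_nat i + 1 <=? b)%Z && pattern i (q + b))%bool.
Proof.
  intros Hb. unfold construction.
  rewrite <- (Z.div_unique (Z.of_nat k * q + b) (Z.of_nat k) q b),
    <- (Z.mod_unique (Z.of_nat k * q + b) (Z.of_nat k) q b) by lia.
  reflexivity.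
Qed.

Lemma construction_outside_band q b : (0 <= b < 2 * Z.of_nat i + 1)%Z -> (b < Z.of_nat k)%Z ->
  construction k i (Z.of_nat k * q + b) = false.
Proof.
  intros Hb Hbk. rewrite construction_block by lia.
  replace (2 * Z.of_nat i + 1 <=? b)%Z with false by (symmetry; apply Z.leb_gt; lia).
  reflexivity.
Qed.

Lemma construction_independent : independent (dist_set k i) (construction k i).
Proof.
  apply independent_of_shift. intros x d Hd.
  destruct (block_decomposition x) as [q [b [-> Hb]]].
  rewrite construction_block by exact Hb.
  intros [Hband Hpat]%andb_prop. apply Z.leb_le in Hband.
  destruct Hd as [<-|[<-|[<-|[]]]].
  - replace (Z.of_nat k * q + b + Z.of_nat k)%Z with (Z.of_nat k * (q + 1) + b)%Z by ring.
    rewrite construction_block, Z.add_shuffle0, pattern_no_consecutive by assumption.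
    apply Bool.andb_false_r.
  - destruct (Z_lt_ge_dec (b + (2 * Z.of_nat i + 1)) (Z.of_nat k)) as [Hin|Hout].
    + replace (Z.of_nat k * q + b + Z.of_nat (k + 2 * i + 1))%Z
        with (Z.of_nat k * (q + 1) + (b + (2 * Z.of_nat i + 1)))%Z by lia.
      rewrite construction_block by lia.
      (* the step adds 2i+2, i.e. subtracts 1 modulo 2i+3 *)
      destruct (pattern i (q + 1 + (b + (2 * Z.of_nat i + 1)))) eqn:Hnext;
        [|apply Bool.andb_false_r].
      apply pattern_no_consecutive in Hnext.
      replace (q + 1 + (b + (2 * Z.of_nat i + 1)) + 1)%Z
        with (q + b + (2 * Z.of_nat i + 3))%Z in Hnext by ring.
      rewrite pattern_periodic in Hnext. congruence.
    + replace (Z.of_nat k * q + b + Z.of_nat (k + 2 * i + 1))%Z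
        with (Z.of_nat k * (q + 2) + (b + (2 * Z.of_nat i + 1) - Z.of_nat k))%Z by lia.
      apply construction_outside_band; lia.
  - destruct (Z_lt_ge_dec (b + 1) (Z.of_nat k)) as [Hin|Hout].
    + replace (Z.of_nat k * q + b + 1)%Z with (Z.of_nat k * q + (b + 1))%Z by ring.
      rewrite construction_block, Z.add_assoc, pattern_no_consecutive by (assumption || lia).
      apply Bool.andb_false_r.
    + replace (Z.of_nat k * q + b + 1)%Z with (Z.of_nat k * (q + 1) + 0)%Z by lia.
      apply construction_outside_band; lia.
Qed.

Lemma construction_run L q b : (2 * Z.of_nat i + 1 <= b)%Z -> (b + Z.of_nat L <= Z.of_nat k)%Z ->
  count_from (construction k i) (Z.of_nat k * q + b) L = count_from (pattern i) (q + b) L.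
Proof.
  revert b; induction L as [|L IH]; intros b Hband HL; [reflexivity|].
  cbn [count_from]. rewrite construction_block by lia.
  replace (2 * Z.of_nat i + 1 <=? b)%Z with true by (symmetry; apply Z.leb_le; lia).
  replace (Z.of_nat k * q + b + 1)%Z with (Z.of_nat k * q + (b + 1))%Z by ring.
  rewrite IH, Z.add_assoc by lia. reflexivity.
Qed.

Lemma construction_block_count x : (block_count_bound k i <= count_from (construction k i) x k)%nat.
Proof.
  unfold block_count_bound.
  destruct (Nat.le_gt_cases k (2 * i + 1)) as [Hsmall|Hlarge].
  { replace (k - (2 * i + 1))%nat with 0%nat by lia. rewrite Nat.Div0.div_0_l. lia. }
  destruct (block_decomposition x) as [q [b [-> Hb]]].
  destruct (Z_le_gt_dec b (2 * Z.of_nat i + 1)) as [Hleft|Hright].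
  - eapply Nat.le_trans; [|apply (count_from_subinterval _ _ _
      (Z.of_nat k * q + (2 * Z.of_nat i + 1))%Z (k - (2 * i + 1))); lia].
    rewrite construction_run by lia.
    eapply Nat.le_trans; [|apply pattern_count_ge]. nia.
  - (* the window is the end of block q followed by the start of block q+1 *)
    set (bn := Z.to_nat b).
    replace (count_from (construction k i) (Z.of_nat k * q + b) k)
      with (count_from (construction k i) (Z.of_nat k * q + b) ((k - bn) + bn)) by (f_equal; lia).
    rewrite count_from_add.
    replace (Z.of_nat k * q + b + Z.of_nat (k - bn))%Z with (Z.of_nat k * (q + 1) + 0)%Z by lia.
    rewrite construction_run by lia.
    assert (Hhead : (count_from (construction k i)
                       (Z.of_nat k * (q + 1) + (2 * Z.of_nat i + 1)) (bn - (2 * i + 1))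
                     <= count_from (construction k i) (Z.of_nat k * (q + 1) + 0) bn)%nat)
      by (apply count_from_subinterval; lia).
    rewrite construction_run in Hhead by lia.
    pose proof (pattern_count_ge i (q + b) (k - bn)).
    pose proof (pattern_count_ge i (q + 1 + (2 * Z.of_nat i + 1)) (bn - (2 * i + 1))).
    pose proof (div_add_le (k - bn) (bn - (2 * i + 1)) (2 * i + 3) ltac:(lia)) as Hdiv.
    replace (k - bn + (bn - (2 * i + 1)))%nat with (k - (2 * i + 1))%nat in Hdiv by lia.
    nia.
Qed.

Lemma construction_window_count N :
  (block_count_bound k i * (2 * N + 1)
   <= k * count_window (construction k i) N + k * block_count_bound k i)%nat.
Proof.
  rewrite count_window_eq.
  set (q := ((2 * N + 1) / k)%nat).
  pose proof (Nat.div_mod (2 * N + 1) k ltac:(lia)) as Hdiv.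
  pose proof (Nat.mod_upper_bound (2 * N + 1) k ltac:(lia)) as Hmod.
  fold q in Hdiv.
  assert (Hblocks : (q * block_count_bound k i
                     <= count_from (construction k i) (- Z.of_nat N) (q * k))%nat)
    by (apply count_from_repeat, construction_block_count).
  assert (Hwindow : (count_from (construction k i) (- Z.of_nat N) (q * k)
                     <= count_from (construction k i) (- Z.of_nat N) (2 * N + 1))%nat)
    by (apply count_from_subinterval; nia).
  nia.
Qed.

End Construction.

Lemma block_count_bound_ge k i :
  ((i + 1) * k <= (2 * i + 3) * block_count_bound k i + (i + 1) * (2 * i + 1 + 2 * (2 * i + 3)))%nat.
Proof.
  unfold block_count_bound.
  pose proof (Nat.div_mod (k - (2 * i + 1)) (2 * i + 3) ltac:(lia)).
  pose proof (Nat.mod_upper_bound (k - (2 * i + 1)) (2 * i + 3) ltac:(lia)).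
  destruct ((k - (2 * i + 1)) / (2 * i + 3))%nat as [|w]; [nia|].
  replace (S w - 1)%nat with w by lia. nia.
Qed.

(** * Densities *)

Lemma eventually_le_scaled C d : 0 < d ->
  exists N0, forall N, (N0 <= N)%nat -> C <= d * INR (2 * N + 1).
Proof.
  intros Hd. destruct (INR_archimed d C Hd) as [N0 HN0]. exists N0. intros N HN.
  assert (INR N0 <= INR (2 * N + 1)) by (apply le_INR; lia). nra.
Qed.

Lemma density_le A c C : (forall N, INR (count_window A N) <= c * INR (2 * N + 1) + C) ->
  forall d, 0 < d -> Rbar_le (density A) (Finite (c + d)).
Proof.
  intros Hcount d Hd. unfold density. rewrite <- (LimSup_seq_const (c + d)).
  apply LimSup_le. destruct (eventually_le_scaled C d Hd) as [N0 HN0].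
  exists N0. intros N HN. specialize (Hcount N). specialize (HN0 N HN).
  apply Rle_div_l; [apply lt_0_INR; lia | lra].
Qed.

Lemma density_ge A c C : (forall N, c * INR (2 * N + 1) - C <= INR (count_window A N)) ->
  forall d, 0 < d -> Rbar_le (Finite (c - d)) (density A).
Proof.
  intros Hcount d Hd. unfold density. rewrite <- (LimSup_seq_const (c - d)).
  apply LimSup_le. destruct (eventually_le_scaled C d Hd) as [N0 HN0].
  exists N0. intros N HN. specialize (Hcount N). specialize (HN0 N HN).
  apply Rle_div_r; [apply lt_0_INR; lia | lra].
Qed.

Lemma density_finite A : exists r, density A = Finite r.
Proof.
  assert (Hle : Rbar_le (density A) (Finite (1 + 1))).
  { apply (density_le A 1 0); [|lra]. intros N. rewrite Rplus_0_r, Rmult_1_l.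
    apply le_INR. unfold count_window.
    eapply Nat.le_trans; [apply filter_length_le|]. rewrite length_map, length_seq. lia. }
  assert (Hge : Rbar_le (Finite (0 - 1)) (density A)).
  { apply (density_ge A 0 0); [|lra]. intros N. pose proof (pos_INR (count_window A N)). lra. }
  destruct (density A) as [r| |]; cbn in Hle, Hge; [eauto | contradiction | contradiction].
Qed.

Lemma density_le_indep_ratio S A : independent S A -> Rbar_le (density A) (indep_ratio S).
Proof.
  intros HA. destruct (density_finite A) as [r Hr]. rewrite Hr.
  apply (proj1 (Lub_Rbar_correct _)). eauto.
Qed.

Lemma indep_ratio_le S c :
  (forall A, independent S A -> Rbar_le (density A) c) -> Rbar_le (indep_ratio S) c.
Proof.
  intros Hc. apply (proj2 (Lub_Rbar_correct _)).
  intros r [A [HA Hr]]. rewrite <- Hr. auto.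
Qed.

Lemma independent_density_le k i A : independent (dist_set k i) A -> forall d, 0 < d ->
  Rbar_le (density A) (Finite (INR (i + 1) / INR (2 * i + 3) + d)).
Proof.
  intros HA. apply (density_le A _ (INR (i + 1) * INR (2 * i + 1 + k) / INR (2 * i + 3))).
  intros N. pose proof (independent_window_count k i A HA N) as Hcount.
  apply le_INR in Hcount. rewrite !mult_INR, (plus_INR (2 * N + 1)) in Hcount.
  assert (Hn : 0 < INR (2 * i + 3)) by (apply lt_0_INR; lia).
  apply (Rmult_le_reg_l (INR (2 * i + 3))); [exact Hn|].
  replace (INR (2 * i + 3) * (INR (i + 1) / INR (2 * i + 3) * INR (2 * N + 1)
             + INR (i + 1) * INR (2 * i + 1 + k) / INR (2 * i + 3)))
    with (INR (i + 1) * (INR (2 * N + 1) + INR (2 * i + 1 + k))) by (field; lra).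
  exact Hcount.
Qed.

Lemma construction_density_ge k i : (0 < k)%nat -> forall d, 0 < d ->
  Rbar_le (Finite (INR (block_count_bound k i) / INR k - d)) (density (construction k i)).
Proof.
  intros Hk. apply (density_ge _ _ (INR (block_count_bound k i))).
  intros N. pose proof (construction_window_count k i Hk N) as Hcount.
  apply le_INR in Hcount. rewrite plus_INR, !mult_INR in Hcount.
  assert (Hkpos : 0 < INR k) by (apply lt_0_INR; lia).
  apply (Rmult_le_reg_l (INR k)); [exact Hkpos|].
  replace (INR k * (INR (block_count_bound k i) / INR k * INR (2 * N + 1)
             - INR (block_count_bound k i)))
    with (INR (block_count_bound k i) * INR (2 * N + 1) - INR k * INR (block_count_bound k i))
    by (field; lra).
  lra.
Qed.

Lemma block_density_ge i eps : 0 < eps -> exists K, forall k, (K <= k)%nat ->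
  (0 < k)%nat /\ INR (i + 1) / INR (2 * i + 3) - eps <= INR (block_count_bound k i) / INR k.
Proof.
  intros Heps.
  set (B := INR ((i + 1) * (2 * i + 1 + 2 * (2 * i + 3)))).
  destruct (INR_archimed eps B Heps) as [K HK].
  exists (Nat.max K 1). intros k Hk. split; [lia|].
  pose proof (block_count_bound_ge k i) as Hcount.
  apply le_INR in Hcount.
  rewrite plus_INR, (mult_INR (i + 1) k), (mult_INR (2 * i + 3)) in Hcount. fold B in Hcount.
  assert (Hn : 1 <= INR (2 * i + 3)) by (apply (le_INR 1); lia).
  assert (Hkpos : 0 < INR k) by (apply lt_0_INR; lia).
  assert (HKk : INR K <= INR k) by (apply le_INR; lia).
  assert (HB : B <= eps * INR k) by nra.
  apply Rle_div_r; [exact Hkpos|].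
  apply (Rmult_le_reg_l (INR (2 * i + 3))); [lra|].
  replace (INR (2 * i + 3) * ((INR (i + 1) / INR (2 * i + 3) - eps) * INR k))
    with (INR (i + 1) * INR k - INR (2 * i + 3) * eps * INR k) by (field; lra).
  assert (eps * INR k <= INR (2 * i + 3) * eps * INR k).
  { rewrite Rmult_assoc. rewrite <- (Rmult_1_l (eps * INR k)) at 1.
    apply Rmult_le_compat_r; [apply Rlt_le, Rmult_lt_0_compat|]; lra. }
  lra.
Qed.

Theorem theorem25 (i : nat) :
  forall eps : R, 0 < eps ->
  exists K : nat, forall k : nat, (K <= k)%nat ->
    Rbar_lt (Finite (INR (i + 1) / INR (2 * i + 3) - eps))
            (indep_ratio (Z.of_nat k :: Z.of_nat (k + 2 * i + 1) :: 1%Z :: nil)) /\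
    Rbar_lt (indep_ratio (Z.of_nat k :: Z.of_nat (k + 2 * i + 1) :: 1%Z :: nil))
            (Finite (INR (i + 1) / INR (2 * i + 3) + eps)).
Proof.
  intros eps Heps.
  destruct (block_density_ge i (eps / 2) ltac:(lra)) as [K HK].
  exists K. intros k Hk. destruct (HK k Hk) as [Hkpos Hblock].
  change (Z.of_nat k :: Z.of_nat (k + 2 * i + 1) :: 1%Z :: nil) with (dist_set k i).
  split.
  - apply (Rbar_lt_le_trans _ (Finite (INR (block_count_bound k i) / INR k - eps / 4))).
    + cbn [Rbar_lt]. lra.
    + eapply Rbar_le_trans; [apply construction_density_ge; [exact Hkpos | lra]|].
      exact (density_le_indep_ratio _ _ (construction_independent k i Hkpos)).
  - apply (Rbar_le_lt_trans _ (Finite (INR (i + 1) / INR (2 * i + 3) + eps / 2))).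
    + apply indep_ratio_le. intros A HA. apply (independent_density_le k i A HA). lra.
    + cbn [Rbar_lt]. lra.
Qed.
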